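(* Let $q\ge3$, $G\in\mathbb G^q$, $S=\Psi(G)$, and $c\in\{1,\dots,q\}$. If every connected component of $S_{\hat c}$ is a tree, then every connected component of the graph obtained from $G_{\hat 0}$ by deleting all color-$c$ edges (the $c$-residues of $G_{\hat 0}$) is a melonic graph with color set $\{1,\dots,q\}\setminus\{c\}$.
   Context: Fix an integer $q\ge 2$. A $(q+1)$-edge-colored graph (colored graph) is a finite connected graph, multiple edges allowed and no loops, whose edges carry colors in $\{0,1,\dots,q\}$ such that every vertex is incident to exactly one edge of each color. It is rooted if one color-0 edge is distinguished and oriented; it is bipartite if its vertices can be colored black and white so that every edge joins a black and a white vertex, with the convention that the origin of the root edge is black. $\mathbb G^q$ denotes the set of rooted bipartite colored graphs. $G_{\hat 0}$ denotes the graph obtained from $G$ by deleting all color-0 edges. Constellations: given $G\in\mathbb G^q$, its constellation $S=\Psi(G)$ is obtained as follows: orient every edge from its black to its white endpoint; contract every color-0 edge into a single vertex, called a white vertex of $S$. For each $i\in\{1,\dots,q\}$ the color-$i$ edges now form directed cycles; for each such cycle, passing through white vertices $w_1,\dots,w_p$ in this cyclic order, add a new vertex of color $i$ joined by one color-$i$ edge to each $w_k$, equip the new vertex with the cyclic order $(w_1,\dots,w_p)$ of its incident edges, and delete the original color-$i$ edges of the cycle. For $c\in\{1,\dots,q\}$, $S_{\hat c}$ is the graph obtained from $S$ by deleting all vertices of color $c$ and all edges of color $c$. Melonic graphs: for a color set $A$ with $|A|=k\ge2$, a melonic graph with colors $A$ is a graph obtained from the graph with two vertices joined by $k$ edges of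 all colors of $A$ by finitely many insertions, where an insertion picks an edge $\{u,v\}$ of some color $a\in A$, deletes it, adds two new vertices $x,y$ joined by $k-1$ edges of the colors $A\setminus\{a\}$, and adds color-$a$ edges $\{u,x\}$ and $\{y,v\}$. *)

From mathcomp Require Import all_boot.
Set Implicit Arguments. Unset Strict Implicit. Unset Printing Implicit Defensive.

(* A (q+1)-edge-colored graph on the finite vertex type V is encoded by, for each
   color i, the involution s i : V -> V sending a vertex to the other endpoint of
   its (unique) color-i edge.  Multiple edges (different colors) are allowed. *)
Definition adj (q : nat) (V : finType) (s : 'I_q.+1 -> V -> V) : rel V :=
  [rel x y | [exists i, s i x == y]].

Definition colored_graph (q : nat) (V : finType) (s : 'I_q.+1 -> V -> V) : Prop :=
  [/\ (forall i v, s i (s i v) = v),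
      (forall i v, s i v != v)
    & (forall u v, connect (adj s) u v)].

(* Rooted bipartite: the root edge is the color-0 edge {r, s ord0 r}, oriented
   from r; [black] is a proper 2-coloring with the origin r black. *)
Definition rooted_bipartite (q : nat) (V : finType) (s : 'I_q.+1 -> V -> V)
  (r : V) (black : pred V) : Prop :=
  black r /\ (forall i v, black (s i v) = ~~ black v).

(* ---- Constellation S = Psi(G) ----
   White vertex of S = color-0 edge of G, indexed by its black endpoint b.
   The color-i edge at black b goes (oriented) to the white s i b, which lies in
   the color-0 edge with black endpoint s 0 (s i b).  Hence the directed color-i
   cycles after contraction are the cycles of perm_col s i := s 0 o s i on
   black vertices; a color-i vertex of S is (i, O) with O such a cycle
   (as a set of white vertices), joined to each white vertex of O. *)
Definition perm_col (q : nat) (V : finType) (s : 'I_q.+1 -> V -> V) (i : 'I_q.+1)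
  : V -> V := fun v => s ord0 (s i v).

Definition Svert (q : nat) (V : finType) := (V + ('I_q.+1 * {set V}))%type.

Definition S_vertex (q : nat) (V : finType) (s : 'I_q.+1 -> V -> V)
  (black : pred V) (x : Svert q V) : bool :=
  match x with
  | inl b => black b
  | inr iO => (iO.1 != ord0) &&
      [exists b, black b && (iO.2 == [set y | fconnect (perm_col s iO.1) b y])]
  end.

Definition Shat_vertex (q : nat) (V : finType) (s : 'I_q.+1 -> V -> V)
  (black : pred V) (c : 'I_q.+1) (x : Svert q V) : bool :=
  S_vertex s black x &&
  match x with inl _ => true | inr iO => iO.1 != c end.

(* edges of S_{\hat c} (S is a simple graph: each white vertex has exactly one
   edge of each color) *)
Definition Shat_edge (q : nat) (V : finType) (s : 'I_q.+1 -> V -> V)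
  (black : pred V) (c : 'I_q.+1) : rel (Svert q V) :=
  fun x y => [&& Shat_vertex s black c x, Shat_vertex s black c y &
    match x, y with
    | inl b, inr iO => b \in iO.2
    | inr iO, inl b => b \in iO.2
    | _, _ => false
    end].

Definition restrict_rel (T : finType) (e : rel T) (D : {set T}) : rel T :=
  [rel x y | [&& e x y, x \in D & y \in D]].

Definition is_tree (T : finType) (e : rel T) (D : {set T}) : Prop :=
  (forall y z, y \in D -> z \in D -> connect (restrict_rel e D) y z) /\
  ~ (exists p : seq T, [/\ 3 <= size p, uniq p, all (mem D) p & cycle e p]).

(* Vertex labels are taken
   in the ambient type T; only the values of s b on D for b in A matter. *)
Inductive melonic (n : nat) (T : finType) (A : {set 'I_n})
  : {set T} -> ('I_n -> T -> T) -> Prop :=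
| melonic_base (u v : T) (s : 'I_n -> T -> T) :
    2 <= #|A| -> u != v ->
    (forall a, a \in A -> s a u = v /\ s a v = u) ->
    melonic A [set u; v] s
| melonic_insert (D : {set T}) (s s' : 'I_n -> T -> T) (a : 'I_n) (u x y : T) :
    melonic A D s -> a \in A -> u \in D ->
    x \notin D -> y \notin D -> x != y ->
    (forall b, b \in A -> b != a -> s' b x = y /\ s' b y = x) ->
    (* the color-a edge {u, v} (v = s a u) is replaced by {u, x} and {y, v} *)
    s' a u = x -> s' a x = u -> s' a y = s a u -> s' a (s a u) = y ->
    (forall b w, b \in A -> b != a -> w \in D -> s' b w = s b w) ->
    (forall w, w \in D -> w != u -> w != s a u -> s' a w = s a w) ->
    melonic A (x |: (y |: D)) s'.

Definition residue_colors (q : nat) (c : 'I_q.+1) : {set 'I_q.+1} :=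
  [set i : 'I_q.+1 | (i != ord0) && (i != c)].

Definition residue_rel (q : nat) (V : finType) (s : 'I_q.+1 -> V -> V)
  (c : 'I_q.+1) : rel V :=
  [rel x y | [exists i in residue_colors c, s i x == y]].

From mathcomp Require Import all_boot.
Set Implicit Arguments. Unset Strict Implicit. Unset Printing Implicit Defensive.

(* We argue by induction on the [defect]: the number of black vertices b
   having a residue color i whose edge at b is not parallel to the 0-edge
   (perm_col s i b != b).
   - Without defect every residue edge doubles a 0-edge, so each residue is a
     two-vertex melon.
   - Otherwise a longest path in the forest S_{\hat c} yields a black vertex
     b with exactly one non-parallel residue color j ([dipole_exists]).
     Swapping two j-edges ([rewire]) turns {b, s 0 b} into a full dipole,
     lowers the defect, keeps S_{\hat c} acyclic, and shows the residue of b
     to be an insertion into a residue of the rewired graph. *)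

Section Graphs.
Variable T : finType.

Lemma connect_stable (e : rel T) (X : pred T) x y :
  X x -> (forall u v, X u -> e u v -> X v) -> connect e x y -> X y.
Proof.
move=> Xx stable /connectP [p pth ->] {y}.
elim: p x Xx pth => [|z p IH] x Xx //= /andP [exz pth].
exact: IH (stable _ _ Xx exz) pth.
Qed.

Definition acyclic_rel (e : rel T) : Prop :=
  ~ exists p : seq T, [/\ 3 <= size p, uniq p & cycle e p].

Lemma path_no_return (e : rel T) z a l y :
  acyclic_rel e -> uniq [:: z, a & l] -> path e z (a :: l) -> y \in l -> e y z ->
  False.
Proof.
move=> acyc u pth yl eyz; case/splitPr: yl u pth => l1 l2 u pth; apply: acyc.
exists [:: z, a & rcons l1 y]; split.
- by rewrite /= size_rcons.
- by move: u; rewrite -cat_rcons -cat_cons -cat_cons cat_uniq => /andP [].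
- move: pth; rewrite /= cat_path /= => /and3P [-> pl /andP [eyl _]].
  by rewrite rcons_path rcons_path pl eyl last_rcons eyz.
Qed.

(* A vertex of a cycle of length at least 3 has two distinct neighbours on it,
   so a vertex all of whose neighbours coincide lies on no such cycle. *)
Lemma cycle_leaf (e : rel T) p x u :
  uniq p -> 3 <= size p -> cycle e p -> x \in p ->
  (forall y, e x y -> y = u) -> (forall y, e y x -> y = u) -> False.
Proof.
move=> up sp cp /rot_to [i p' rot_p] out_u in_u.
have : uniq (x :: p') by rewrite -rot_p rot_uniq.
have : cycle e (x :: p') by rewrite -rot_p rot_cycle.
have : 3 <= size (x :: p') by rewrite -rot_p size_rot.
case: p' {rot_p} => [|a [|a2 p'']] //= _.
move=> /and3P [exa _]; rewrite rcons_path => /andP [_ elx] /and4P [_ na _ _].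
by move: na; rewrite (out_u _ exa) -(in_u _ elx) mem_last.
Qed.

Lemma cycle_connect (e : rel T) p x y :
  cycle e p -> x \in p -> y \in p -> connect e x y.
Proof.
move=> cp /rot_to [i p' rot_p] yp.
have /= pth : cycle e (x :: p') by rewrite -rot_p rot_cycle.
apply: (path_connect pth).
by move: yp; rewrite -(mem_rot i) rot_p !inE mem_rcons inE => /orP [->|->]; rewrite ?orbT.
Qed.

(* A relation all of whose components (among the vertices satisfying P, which
   include every source of an edge) are trees has no cycle, since a cycle
   stays in the component of any of its vertices. *)
Lemma trees_acyclic (e : rel T) (P : pred T) :
  (forall x y, e x y -> P x) -> (forall x, P x -> is_tree e [set y | connect e x y]) ->
  acyclic_rel e.
Proof.
move=> e_P trees [p [size_p uniq_p cycle_p]].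
case: p => [//|x p] in size_p uniq_p cycle_p *.
have xp : x \in x :: p by rewrite mem_head.
apply: (trees x (e_P _ _ (next_cycle cycle_p xp))).2; exists (x :: p); split=> //.
by apply/allP=> y yp; rewrite /= !inE; apply: (cycle_connect cycle_p xp yp).
Qed.

Lemma fconnect_fixed (f : T -> T) b k : f b = b -> fconnect f b k -> k = b.
Proof.
move=> fb bk; apply/eqP; apply: (connect_stable (X := pred1 b) _ _ bk) => //=.
by move=> u v /eqP -> /eqP <-; rewrite fb.
Qed.

Lemma exists_longest (P : pred (seq T)) l0 :
  P l0 -> (forall l, P l -> uniq l) ->
  exists2 l, P l & forall l', P l' -> size l' <= size l.
Proof.
move=> Pl0 P_uniq.
pose has_len n := [exists l : n.-tuple T, P l].
have len0 : exists n, has_len n by exists (size l0); apply/existsP; exists (in_tuple l0).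
have bound n : has_len n -> n <= #|T|.
  by case/existsP=> l Pl; rewrite -(size_tuple l) -(card_uniqP (P_uniq _ Pl)) max_card.
case: (ex_maxnP len0 bound) => n /existsP [l Pl] longest.
exists (tval l) => // l' Pl'; rewrite size_tuple.
by apply: longest; apply/existsP; exists (in_tuple l').
Qed.

Section LongestPath.
Variable e : rel T.
Hypotheses (e_sym : symmetric e) (e_irr : irreflexive e) (e_acyc : acyclic_rel e).

Definition long_path (l : seq T) : bool := [&& uniq l, sorted e l & 3 < size l].

Lemma long_path_uniq l : long_path l -> uniq l.
Proof. by case/and3P. Qed.

Definition longest (l : seq T) : Prop :=
  long_path l /\ forall l', long_path l' -> size l' <= size l.

(* A neighbour of the start outside the path would extend it; one further
   along the path would close a cycle. *)
Lemma longest_path_leaf z a l y : longest [:: z, a & l] -> e z y -> y = a.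
Proof.
move=> [/and3P [u pth big] max] ezy.
have [yl|yl] := boolP (y \in [:: z, a & l]); last first.
  have : long_path (y :: [:: z, a & l]).
    apply/and3P; split; [by rewrite cons_uniq yl u | | exact: ltnW].
    by rewrite /= e_sym ezy; exact: pth.
  by move/max; rewrite ltnn.
move: yl; rewrite !inE => /or3P [/eqP yz|/eqP //|yl].
  by move: ezy; rewrite yz e_irr.
by case: (path_no_return e_acyc u pth yl); rewrite e_sym.
Qed.

(* A neighbour y of the second vertex, off the path, can replace the start,
   giving another longest path, so y is a leaf too. *)
Lemma longest_path_twig z a h l y y' :
  longest [:: z, a, h & l] -> e a y -> y != z -> y != h -> e y y' -> y' = a.
Proof.
move=> [/and3P [u pth big] max] eay yz yh eyy'.
have u' : uniq [:: a, h & l] by case/andP: u.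
have pth' : path e a (h :: l) by case/andP: pth.
have yl : y \notin l.
  by apply/negP=> yl; case: (path_no_return e_acyc u' pth' yl); rewrite e_sym.
have ya : y != a by apply: contraTneq eay => ->; rewrite e_irr.
apply: (@longest_path_leaf y a (h :: l)) eyy'; split.
  apply/and3P; split; [by rewrite cons_uniq !inE !negb_or ya yh yl u' | | by []].
  by rewrite /= e_sym eay; exact: pth'.
by move=> l' /max.
Qed.

End LongestPath.

Section CutOut.
Variables (B : pred T) (f g : T -> T) (b b' : T).
Hypotheses (f_inj : injective f) (fB : forall z, B z -> B (f z))
  (gB : forall z, B z -> B (g z)) (fb' : f b' = b) (gb : g b = b) (gb' : g b' = f b)
  (gf : forall z, B z -> z != b -> z != b' -> g z = f z) (b'b : b' != b).

Lemma cutout_sub x y : B x -> fconnect g x y -> fconnect f x y.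
Proof.
move=> Bx xy.
suff : B y && fconnect f x y by case/andP.
apply: (connect_stable (X := [pred z | B z && fconnect f x z]) _ _ xy).
  by rewrite /= Bx connect0.
move=> u v /andP [Bu xu] /eqP <-; rewrite /= gB //=.
have [eub|ub] := eqVneq u b; first by rewrite eub gb -eub.
have [eub'|ub'] := eqVneq u b'; last by rewrite gf // (connect_trans xu (fconnect1 _ _)).
rewrite eub' gb'; apply: (connect_trans xu); rewrite eub' -fb'.
exact: connect_trans (fconnect1 _ _) (fconnect1 _ _).
Qed.

Lemma cutout_isolated x : B x -> x != b -> fconnect g x b = false.
Proof.
move=> Bx xb; apply/negP=> x_b.
suff : B b && (b != b) by rewrite eqxx andbF.
apply: (connect_stable (X := [pred z | B z && (z != b)]) _ _ x_b); first by rewrite /= Bx.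
move=> u v /= /andP [Bu ub] /eqP <-; rewrite /= gB //=.
have [->|ub'] := eqVneq u b'.
  by rewrite gb'; apply/eqP=> fbb; move/eqP: b'b; apply; apply: f_inj; rewrite fb' fbb.
by rewrite gf // -fb' (inj_eq f_inj).
Qed.

Lemma cutout_sup x y : B x -> x != b -> y != b -> fconnect f x y -> fconnect g x y.
Proof.
move=> Bx xb yb xy.
suff : B y && (fconnect g x y || ((y == b) && fconnect g x b')).
  by rewrite (negbTE yb) orbF => /andP [].
pose X := [pred z | B z && (fconnect g x z || ((z == b) && fconnect g x b'))].
apply: (connect_stable (X := X) _ _ xy); first by rewrite /= Bx connect0.
move=> u v /= /andP [Bu /orP [xu | /andP [/eqP eub xb']]] /eqP <-; rewrite /= fB //=.
- have [ub|ub] := eqVneq u b; first by move: xu; rewrite ub cutout_isolated.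
  have [eub'|ub'] := eqVneq u b'; first by rewrite eub' fb' eqxx -eub' xu orbT.
  by rewrite -gf // (connect_trans xu (fconnect1 _ _)).
- by rewrite eub -gb' (connect_trans xb' (fconnect1 _ _)).
Qed.

End CutOut.
End Graphs.

Lemma melonic_closed n (T : finType) (A : {set 'I_n}) (D : {set T})
    (s : 'I_n -> T -> T) :
  melonic A D s -> forall a z, a \in A -> z \in D -> s a z \in D.
Proof.
elim=> {D s} [u v s _ _ uv a z aA|D s s' a u x y _ IH aA uD _ _ _ xy su sx sy ssu sb sa b z bA].
  by have [suv svu] := uv a aA; rewrite !inE => /orP [] /eqP ->; rewrite ?suv ?svu eqxx ?orbT.
rewrite !inE => /or3P [/eqP ->|/eqP ->|zD].
- have [->|ba] := eqVneq b a; first by rewrite sx uD !orbT.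
  by have [-> _] := xy b bA ba; rewrite eqxx orbT.
- have [->|ba] := eqVneq b a; first by rewrite sy IH ?orbT.
  by have [_ ->] := xy b bA ba; rewrite eqxx.
- have [eba|ba] := eqVneq b a; last by rewrite sb // IH ?orbT.
  have [->|zu] := eqVneq z u; first by rewrite eba su eqxx.
  have [->|zsu] := eqVneq z (s a u); first by rewrite eba ssu eqxx orbT.
  by rewrite eba sa // IH ?orbT // -eba.
Qed.

Lemma melonic_transfer n (T : finType) (A : {set 'I_n}) (D : {set T})
    (s t : 'I_n -> T -> T) :
  melonic A D s -> (forall a z, a \in A -> z \in D -> t a z = s a z) ->
  melonic A D t.
Proof.
case=> {D s} [u v s A2 uv suv|D s s' a u x y m aA uD xD yD xy xy_edges su sx sy ssu sb sa] ts.
  by apply: melonic_base => // a aA; rewrite !ts ?inE ?eqxx ?orbT //; apply: suv.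
have inD z : z \in D -> z \in x |: (y |: D) by move=> zD; rewrite !inE zD !orbT.
have inx : x \in x |: (y |: D) by rewrite !inE eqxx.
have iny : y \in x |: (y |: D) by rewrite !inE eqxx orbT.
apply: (melonic_insert (s := s) m aA uD xD yD xy).
- by move=> b bA ba; rewrite !ts //; apply: xy_edges.
- by rewrite ts ?inD.
- by rewrite ts.
- by rewrite ts.
- by rewrite ts ?inD ?(melonic_closed m).
- by move=> b w bA ba wD; rewrite ts ?inD ?sb.
- by move=> w wD wu wsu; rewrite ts ?inD ?sa.
Qed.

Section Residues.
Variables (q : nat) (V : finType) (c : 'I_q.+1) (t : 'I_q.+1 -> V -> V).
Hypothesis t_inv : forall i v, t i (t i v) = v.
Local Notation A := (residue_colors c).

Definition residue (v : V) : {set V} := [set z | connect (residue_rel t c) v z].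

Lemma residue_rel_sym : symmetric (residue_rel t c).
Proof.
move=> x y; apply/existsP/existsP=> [] [i /andP [iA /eqP <-]];
  by exists i; rewrite t_inv eqxx andbT.
Qed.

Lemma residue_root v : v \in residue v.
Proof. by rewrite inE connect0. Qed.

Lemma residue_step v z i : z \in residue v -> i \in A -> t i z \in residue v.
Proof.
move=> vz iA; rewrite inE in vz; rewrite inE; apply: (connect_trans vz); apply: connect1.
by apply/existsP; exists i; rewrite iA eqxx.
Qed.

Lemma residue_ind (X : pred V) v : X v -> (forall z i, X z -> i \in A -> X (t i z)) ->
  forall z, z \in residue v -> X z.
Proof.
move=> Xv X_step z; rewrite inE; apply: (connect_stable Xv).
by move=> u y Xu /existsP [i /andP [iA /eqP <-]]; apply: X_step.
Qed.

Lemma residue_eq v u : connect (residue_rel t c) v u -> residue v = residue u.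
Proof.
move=> vu; apply/setP=> z; rewrite !inE; apply: same_connect => //.
exact: sym_connect_sym residue_rel_sym.
Qed.

Lemma residue_back v z : z \in residue v -> connect (residue_rel t c) z v.
Proof. by rewrite inE (sym_connect_sym residue_rel_sym). Qed.

End Residues.

Section ResidueColors.
Variables (q : nat) (c : 'I_q.+1).
Hypotheses (q3 : 3 <= q) (c0 : c != ord0).
Local Notation A := (residue_colors c).

(* The residue colors are the q - 1 colors other than 0 and c. *)
Lemma residue_colors_two : exists i1 i2, [/\ i1 \in A, i2 \in A & i1 != i2].
Proof.
have A_def : A = [set: 'I_q.+1] :\ ord0 :\ c.
  by apply/setP=> i; rewrite !inE andbT andbC.
have : 1 < #|[set: 'I_q.+1] :\ ord0 :\ c|.
  have card_A := cardsD1 c ([set: 'I_q.+1] :\ ord0).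
  have card_T := cardsD1 ord0 [set: 'I_q.+1].
  rewrite !inE c0 add1n in card_A; rewrite inE cardsT card_ord add1n in card_T.
  by case: card_T card_A => <- qA; rewrite -ltnS -qA.
rewrite -A_def; by case/card_gt1P => i1 [i2 [h1 h2 h3]]; exists i1, i2.
Qed.

Lemma residue_color_other j : exists2 k, k \in A & k != j.
Proof.
have [i1 [i2 [i1A i2A i12]]] := residue_colors_two.
have [<-|i1j] := eqVneq i1 j; last by exists i1.
by exists i2; rewrite // eq_sym.
Qed.

End ResidueColors.

Section Constellation.
Variables (q : nat) (V : finType) (black : pred V) (c : 'I_q.+1)
  (t : 'I_q.+1 -> V -> V).
Hypotheses (t_inv : forall i v, t i (t i v) = v)
  (t_bip : forall i v, black (t i v) = ~~ black v).
Local Notation A := (residue_colors c).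
Local Notation sigma i := (perm_col t i).
Local Notation e := (Shat_edge t black c).

(* Bipartiteness forbids loops. *)
Lemma color_noloop i v : t i v != v.
Proof. by apply/eqP=> tv; have := t_bip i v; rewrite tv; case: (black v). Qed.

Lemma perm_col_inj i : injective (sigma i).
Proof. by apply: (can_inj (g := fun v => t i (t ord0 v))) => v; rewrite /perm_col !t_inv. Qed.

Lemma perm_col_black i v : black (sigma i v) = black v.
Proof. by rewrite /perm_col !t_bip negbK. Qed.

Lemma perm_col_fixed i b : (sigma i b == b) = (t i b == t ord0 b).
Proof.
rewrite /perm_col; apply/eqP/eqP=> [fb|->]; last by rewrite t_inv.
by rewrite -[in RHS]fb t_inv.
Qed.

Definition col_orbit (i : 'I_q.+1) (b : V) : {set V} := [set y | fconnect (sigma i) b y].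

Definition color_vertex (i : 'I_q.+1) (b : V) : Svert q V := inr (i, col_orbit i b).

Lemma col_orbit_sym i x y : fconnect (sigma i) x y = fconnect (sigma i) y x.
Proof. exact/fconnect_sym/perm_col_inj. Qed.

Lemma col_orbit_eq i x y : fconnect (sigma i) x y -> col_orbit i x = col_orbit i y.
Proof.
move=> xy; apply/setP=> z; rewrite !inE; apply/idP/idP; last exact: connect_trans.
by apply: connect_trans; rewrite col_orbit_sym.
Qed.

Lemma Sedge_sym : symmetric e.
Proof. by move=> [x|[i O]] [y|[j P]]; rewrite /Shat_edge //= ?andbF // andbCA. Qed.

Lemma Sedge_irr : irreflexive e.
Proof. by case=> [x|[i O]]; rewrite /Shat_edge /= !andbF. Qed.

Lemma Sedge_black_black x y : e (inl x) (inl y) = false.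
Proof. by rewrite /Shat_edge /= !andbF. Qed.

Lemma Sedge_color_color x y : e (inr x) (inr y) = false.
Proof. by case: x y => [? ?] [? ?]; rewrite /Shat_edge /= !andbF. Qed.

Lemma Sedge_black_color b i O : e (inl b) (inr (i, O)) =
  [&& black b, i \in A, [exists b0, black b0 && (O == col_orbit i b0)] & b \in O].
Proof.
rewrite /Shat_edge /Shat_vertex /S_vertex /= inE andbT /col_orbit.
by case: (black b); case: (i != ord0); case: (i != c); rewrite /= ?andbT ?andbF.
Qed.

Lemma color_vertex_edge k i b :
  black b -> i \in A -> k \in col_orbit i b -> e (inl k) (color_vertex i b).
Proof.
move=> bb iA kO; rewrite Sedge_black_color iA kO andbT.
have -> : black k.
  rewrite inE in kO; apply: (connect_stable (X := black) bb _ kO).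
  by move=> u v bu /eqP <-; rewrite perm_col_black.
by apply/existsP; exists b; rewrite bb eqxx.
Qed.

Lemma Sedge_color_vertex b i O :
  e (inl b) (inr (i, O)) -> O = col_orbit i b /\ i \in A.
Proof.
rewrite Sedge_black_color => /and4P [_ iA /existsP [b0 /andP [_ /eqP ->]] bO].
by split=> //; apply: col_orbit_eq; rewrite inE in bO.
Qed.

Lemma Sedge_black b y : e (inl b) y -> black b.
Proof. by case: y => [y|[i O]]; rewrite ?Sedge_black_black // Sedge_black_color => /and4P []. Qed.

(* A black vertex has two distinct neighbours (one for each of two colors). *)
Lemma black_vertex_branching b : 3 <= q -> c != ord0 -> black b ->
  exists y1 y2, [/\ e (inl b) y1, e (inl b) y2 & y1 != y2].
Proof.
move=> q3 c0 bb; have [i1 [i2 [i1A i2A i12]]] := residue_colors_two q3 c0.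
have b_in i : b \in col_orbit i b by rewrite inE connect0.
exists (color_vertex i1 b), (color_vertex i2 b).
rewrite !color_vertex_edge //; split=> //.
by apply/eqP=> -[i12']; rewrite i12' eqxx in i12.
Qed.

Lemma color_vertex_leaf b i O : sigma i b = b -> e (inl b) (inr (i, O)) ->
  forall y, e (inr (i, O)) y -> y = inl b.
Proof.
move=> fb /Sedge_color_vertex [-> _] [k|y]; last by rewrite Sedge_color_color.
rewrite Sedge_sym Sedge_black_color => /and4P [_ _ _].
by rewrite inE => /(fconnect_fixed fb) ->.
Qed.

Lemma color_vertex_branching b i : black b -> i \in A ->
  e (inl b) (color_vertex i b) /\ e (color_vertex i b) (inl (sigma i b)).
Proof.
move=> bb iA; split; first by rewrite color_vertex_edge // inE connect0.
by rewrite Sedge_sym color_vertex_edge // inE fconnect1.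
Qed.

(* A non-parallel residue edge at a black vertex b0 yields a path
   b0, (i0, b0), sigma i0 b0, (i1, sigma i0 b0) of length 4. *)
Lemma long_path_exists b0 i0 : 3 <= q -> c != ord0 ->
  black b0 -> i0 \in A -> sigma i0 b0 != b0 -> exists l, long_path e l.
Proof.
move=> q3 c0 bb0 i0A nf0; have [i1 i1A i10] := residue_color_other q3 c0 i0.
pose b1 := sigma i0 b0.
have [e1 e2] := color_vertex_branching bb0 i0A; rewrite -/b1 in e2.
have bb1 : black b1 by rewrite perm_col_black.
have [e3 _] := color_vertex_branching bb1 i1A.
exists [:: inl b0; color_vertex i0 b0; inl b1; color_vertex i1 b1].
rewrite /long_path /= e1 e2 e3 !inE /color_vertex /= !andbT.
rewrite -[inl b0 == inl b1]/(b0 == b1) -[inr _ == inr _]/((i0, _) == (i1, _)).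
by rewrite xpair_eqE eq_sym (negbTE nf0) [i0 == _]eq_sym (negbTE i10).
Qed.

(* A longest path starts at a leaf, which cannot be black (black vertices
   branch), so its second vertex is black. *)
Lemma longest_second_black z a l : 3 <= q -> c != ord0 -> acyclic_rel e ->
  longest e [:: z, a & l] -> exists2 b, a = inl b & black b.
Proof.
move=> q3 c0 acyc lst; have z_leaf := longest_path_leaf Sedge_sym Sedge_irr acyc lst.
have eza : e z a by case: lst => /and3P [_ /andP []].
case: z {lst} z_leaf eza => [b2|[iz Oz]] z_leaf eza.
  have [y1 [y2 [e1 e2 y12]]] := black_vertex_branching q3 c0 (Sedge_black eza).
  by move: y12; rewrite (z_leaf _ e1) (z_leaf _ e2) eqxx.
case: a {z_leaf} eza => [b|y]; last by rewrite Sedge_color_color.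
by rewrite Sedge_sym => /Sedge_black bb; exists b.
Qed.

(* Take a longest path
   z, b, h, k, ... of S_{\hat c}: every non-parallel color at b gives a
   non-leaf neighbour of b other than the leaf z, which must be h; and h is
   itself non-parallel since it is no leaf. *)
Lemma dipole_exists : 3 <= q -> c != ord0 -> acyclic_rel e ->
  (exists b i, [/\ black b, i \in A & sigma i b != b]) ->
  exists b j, [/\ black b, j \in A, sigma j b != b &
                 forall i, i \in A -> i != j -> sigma i b = b].
Proof.
move=> q3 c0 acyc [b0 [i0 [bb0 i0A nf0]]].
have [l0 path0] := long_path_exists q3 c0 bb0 i0A nf0.
have [l Pl longest_l] := exists_longest path0 (@long_path_uniq _ e).
case: l Pl longest_l => [|z [|a [|h [|k l4]]]]; rewrite /long_path ?andbF // => Pl longest_l.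
have lst : longest e [:: z, a, h, k & l4] by [].
have [b a_b bb] := longest_second_black q3 c0 acyc lst; subst a.
have z_leaf := longest_path_leaf Sedge_sym Sedge_irr acyc lst.
have h_only i : i \in A -> sigma i b != b -> color_vertex i b = h.
  move=> iA nf; have [eby eyb'] := color_vertex_branching bb iA.
  have b'b : inl (sigma i b) != inl b :> Svert q V by rewrite (inj_eq inl_inj).
  have yz : color_vertex i b != z.
    by apply: contraNneq b'b => yz; apply/eqP/z_leaf; rewrite -yz.
  apply/eqP/negPn/negP => yh; move/eqP: b'b; apply.
  exact: (longest_path_twig Sedge_sym Sedge_irr acyc lst eby yz yh eyb').
have /and3P [ul /and4P [_ ebh ehk _] _] := Pl.
case: h {Pl longest_l lst} ebh ehk ul h_only => [?|[j O]] ebh ehk ul h_only.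
  by rewrite Sedge_black_black in ebh.
have [_ jA] := Sedge_color_vertex ebh.
exists b, j; split=> //.
  apply/negP=> /eqP fb; move: ul.
  by rewrite (color_vertex_leaf fb ebh ehk) /= !inE eqxx !orbT andbF.
move=> i iA ij; apply/eqP/negPn/negP => nf.
by case: (h_only i iA nf) => /eqP; rewrite (negbTE ij).
Qed.

End Constellation.

Definition defect (q : nat) (V : finType) (black : pred V) (c : 'I_q.+1)
    (t : 'I_q.+1 -> V -> V) : nat :=
  #|[set z | black z && [exists i in residue_colors c, perm_col t i z != z]]|.

(* Let b be black with exactly one residue color j whose
   edge at b is not parallel to its 0-edge {b, w}: every other residue edge at
   b goes to w, and the j-edges at b and w are {b, w'} and {w, b'}.  Replacing
   them by {b, w} and {b', w'} turns {b, w} into a full dipole and removes it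
   from the residue, which then arises from the new one by an insertion on
   the j-edge {b', w'}. *)
Section Rewire.
Variables (q : nat) (V : finType) (black : pred V) (c : 'I_q.+1)
  (t : 'I_q.+1 -> V -> V) (b : V) (j : 'I_q.+1).
Hypotheses (q3 : 3 <= q) (c0 : c != ord0) (t_inv : forall i v, t i (t i v) = v)
  (t_bip : forall i v, black (t i v) = ~~ black v)
  (bb : black b) (jA : j \in residue_colors c) (nfj : perm_col t j b != b)
  (fix_other : forall i, i \in residue_colors c -> i != j -> perm_col t i b = b).
Local Notation A := (residue_colors c).
Local Notation w := (t ord0 b).
Local Notation w' := (t j b).
Local Notation b' := (t j (t ord0 b)).

Definition rewire (i : 'I_q.+1) (z : V) : V :=
  if i == j then
    (if z == b then w else if z == w then b else if z == b' then w'
     else if z == w' then b' else t j z)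
  else t i z.
Local Notation t' := rewire.

Lemma black_w : black w = false. Proof. by rewrite t_bip bb. Qed.
Lemma black_w' : black w' = false. Proof. by rewrite t_bip bb. Qed.
Lemma black_b' : black b'. Proof. by rewrite t_bip black_w. Qed.

Lemma neq_bw : b != w. Proof. by apply: contraTneq bb => ->; rewrite black_w. Qed.
Lemma neq_bw' : b != w'. Proof. by apply: contraTneq bb => ->; rewrite black_w'. Qed.
Lemma neq_b'w : b' != w. Proof. by apply: contraTneq black_b' => ->; rewrite black_w. Qed.
Lemma neq_b'w' : b' != w'. Proof. by apply: contraTneq black_b' => ->; rewrite black_w'. Qed.
Lemma neq_w'w : w' != w. Proof. by rewrite -(perm_col_fixed t_inv). Qed.
Lemma neq_b'b : b' != b.
Proof. by apply: contraNneq neq_w'w => b'b; rewrite -{1}b'b t_inv. Qed.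

Lemma j_neq0 : ord0 != j.
Proof. by move: jA; rewrite inE eq_sym => /andP []. Qed.

Lemma rewire_other i z : i != j -> t' i z = t i z.
Proof. by rewrite /t' => /negbTE ->. Qed.

Lemma rewire0 z : t' ord0 z = t ord0 z.
Proof. exact: rewire_other j_neq0. Qed.

Lemma rewire_rest z : z != b -> z != w -> z != b' -> z != w' -> t' j z = t j z.
Proof. by rewrite /t' eqxx => /negbTE -> /negbTE -> /negbTE -> /negbTE ->. Qed.

Lemma rewire_b : t' j b = w. Proof. by rewrite /t' !eqxx. Qed.
Lemma rewire_w : t' j w = b. Proof. by rewrite /t' eqxx eq_sym (negbTE neq_bw) eqxx. Qed.
Lemma rewire_b' : t' j b' = w'.
Proof. by rewrite /t' eqxx (negbTE neq_b'b) (negbTE neq_b'w) eqxx. Qed.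
Lemma rewire_w' : t' j w' = b'.
Proof.
by rewrite /t' eqxx eq_sym (negbTE neq_bw') (negbTE neq_w'w) eq_sym (negbTE neq_b'w') eqxx.
Qed.

(* The four rewired vertices form two j-edges of t, so t j avoids them
   outside. *)
Lemma t_rest_avoid z : z != b -> z != w -> z != b' -> z != w' ->
  [/\ t j z != b, t j z != w, t j z != b' & t j z != w'].
Proof.
move=> zb zw zb' zw'; split; apply/eqP=> tz.
- by move/eqP: zw'; apply; rewrite -tz t_inv.
- by move/eqP: zb'; apply; rewrite -tz t_inv.
- by move/eqP: zw; apply; rewrite -[RHS](t_inv j) -tz t_inv.
- by move/eqP: zb; apply; rewrite -[RHS](t_inv j) -tz t_inv.
Qed.

Lemma rewire_inv i z : t' i (t' i z) = z.
Proof.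
have [ij|ij] := eqVneq i j; last by rewrite !rewire_other.
rewrite ij.
have [->|zb] := eqVneq z b; first by rewrite rewire_b rewire_w.
have [->|zw] := eqVneq z w; first by rewrite rewire_w rewire_b.
have [->|zb'] := eqVneq z b'; first by rewrite rewire_b' rewire_w'.
have [->|zw'] := eqVneq z w'; first by rewrite rewire_w' rewire_b'.
have [tzb tzw tzb' tzw'] := t_rest_avoid zb zw zb' zw'.
by rewrite !rewire_rest // t_inv.
Qed.

Lemma rewire_bip i z : black (t' i z) = ~~ black z.
Proof.
have [ij|ij] := eqVneq i j; last by rewrite rewire_other.
rewrite ij.
have [->|zb] := eqVneq z b; first by rewrite rewire_b black_w bb.
have [->|zw] := eqVneq z w; first by rewrite rewire_w black_w bb.
have [->|zb'] := eqVneq z b'; first by rewrite rewire_b' black_w' black_b'.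
have [->|zw'] := eqVneq z w'; first by rewrite rewire_w' black_w' black_b'.
by rewrite rewire_rest.
Qed.

Lemma rewire_fixes_b i : i \in A -> perm_col t' i b = b.
Proof.
move=> iA; rewrite /perm_col rewire0.
have [->|ij] := eqVneq i j; first by rewrite rewire_b t_inv.
by rewrite rewire_other // -[RHS](fix_other iA ij).
Qed.

Lemma perm_col_rewire_other i : i != j -> perm_col t' i =1 perm_col t i.
Proof. by move=> ij z; rewrite /perm_col rewire0 rewire_other. Qed.

(* On black vertices, perm_col t' j is perm_col t j with b cut out of its
   cycle; b' is the predecessor of b. *)
Lemma perm_col_b' : perm_col t j b' = b.
Proof. by rewrite /perm_col !t_inv. Qed.

Lemma perm_col_rewire_b' : perm_col t' j b' = perm_col t j b.
Proof. by rewrite /perm_col rewire_b' rewire0. Qed.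

Lemma perm_col_rewire_rest z : black z -> z != b -> z != b' ->
  perm_col t' j z = perm_col t j z.
Proof.
move=> bz zb zb'; rewrite /perm_col rewire0 rewire_rest //.
  by apply: contraTneq bz => ->; rewrite black_w.
by apply: contraTneq bz => ->; rewrite black_w'.
Qed.

Lemma col_orbit_rewire b0 y : black b0 -> b0 != b ->
  (y \in col_orbit t j b0) =
  (y \in col_orbit t' j b0) || ((y == b) && (b' \in col_orbit t' j b0)).
Proof.
move=> bb0 b0b.
have f_inj := perm_col_inj t_inv (i := j).
have fB z : black z -> black (perm_col t j z) by rewrite perm_col_black.
have gB z : black z -> black (perm_col t' j z) by rewrite (perm_col_black rewire_bip).
have cut := rewire_fixes_b jA.
have g_sub := cutout_sub gB perm_col_b' cut perm_col_rewire_b' perm_col_rewire_rest.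
have g_sup := cutout_sup f_inj fB gB perm_col_b' perm_col_rewire_b' perm_col_rewire_rest neq_b'b.
have g_b := cutout_isolated f_inj gB perm_col_b' perm_col_rewire_b' perm_col_rewire_rest neq_b'b.
have b'_b : fconnect (perm_col t j) b' b.
  by have := fconnect1 (perm_col t j) b'; rewrite perm_col_b'.
rewrite !inE; have [->|yb] := eqVneq y b; last first.
  by rewrite orbF; apply/idP/idP; [apply: g_sup | apply: g_sub].
rewrite g_b //=; apply/idP/idP => [b0_b|b0_b'].
  apply: g_sup neq_b'b _ => //; apply: (connect_trans b0_b).
  by rewrite (col_orbit_sym t_inv).
exact: connect_trans (g_sub _ _ bb0 b0_b') b'_b.
Qed.

Definition unrewire (x : Svert q V) : Svert q V :=
  match x with
  | inl z => inl z
  | inr iO => inr (iO.1, if (iO.1 == j) && (b' \in iO.2) then b |: iO.2 else iO.2)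
  end.

Definition avoids_b (x : Svert q V) : bool :=
  match x with inl z => z != b | inr iO => b \notin iO.2 end.

(* Adding b back is undone by removing it, hence injective. *)
Lemma unrewire_inj : {in avoids_b &, injective unrewire}.
Proof.
pose drop_b (x : Svert q V) := if x is inr iO then inr (iO.1, iO.2 :\ b) else x.
apply: (can_in_inj (g := drop_b)) => -[x|[i O]] //; rewrite /in_mem /= => bO.
congr (inr (_, _)); apply/setP=> y; rewrite !inE.
case: ifP => _; rewrite ?inE //; by have [->|] := eqVneq y b; rewrite ?(negbTE bO).
Qed.

Lemma unrewire_edge z i (O : {set V}) : z != b -> b \notin O ->
  Shat_edge t' black c (inl z) (inr (i, O)) ->
  Shat_edge t black c (inl z) (unrewire (inr (i, O))).
Proof.
move=> zb bO; rewrite /unrewire /= !Sedge_black_color.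
case/and4P=> bz iA /existsP [b0 /andP [bb0 /eqP O_def]] zO.
rewrite bz iA /=; apply/andP; split; last by case: ifP; rewrite ?inE zO ?orbT.
apply/existsP; exists b0; rewrite bb0 /=; apply/eqP.
have [ij|ij] := eqVneq i j; last first.
  by rewrite O_def; apply/setP=> y; rewrite !inE; apply: eq_fconnect; apply: perm_col_rewire_other.
rewrite ij in O_def *; rewrite /=.
have b0b : b0 != b by apply: contraNneq bO => <-; rewrite O_def inE connect0.
apply/setP=> y; rewrite col_orbit_rewire // -O_def.
by case: ifP => b'O; rewrite ?inE ?b'O ?andbT ?andbF ?orbF // orbC.
Qed.

(* In S'_{\hat c} the color vertices through b are leaves at [inl b], so no
   cycle passes through b. *)
Lemma rewire_cycle_avoids_b p :
  uniq p -> 3 <= size p -> cycle (Shat_edge t' black c) p -> {in p, forall x, avoids_b x}.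
Proof.
move=> up sp cp.
have no_b_color i (O : {set V}) : b \in O -> inr (i, O) \notin p.
  apply: contraTN => ip; have := next_cycle cp ip.
  case: (next p (inr (i, O))) => [k|y]; last by rewrite Sedge_color_color.
  rewrite Sedge_sym Sedge_black_color => /and4P [_ iA O_ok _]; apply/negP=> bO.
  have ebi : Shat_edge t' black c (inl b) (inr (i, O)) by rewrite Sedge_black_color bb iA O_ok.
  have leaf := color_vertex_leaf rewire_inv (rewire_fixes_b iA) ebi.
  by apply: (cycle_leaf up sp cp ip leaf) => y; rewrite Sedge_sym => /leaf.
move=> [z|[i O]] xp /=; last by apply: contraL xp; apply: no_b_color.
apply: contraTneq xp => ->; apply/negP=> bp.
have := next_cycle cp bp; have := mem_next p (inl b); rewrite bp.
case: (next p (inl b)) => [k|[i O]] ip; first by rewrite Sedge_black_black.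
by rewrite Sedge_black_color => /and4P [_ _ _ bO]; move: ip; rewrite (negbTE (no_b_color _ _ bO)).
Qed.

Lemma rewire_acyclic : acyclic_rel (Shat_edge t black c) -> acyclic_rel (Shat_edge t' black c).
Proof.
move=> acyc [p [sp up cp]]; apply: acyc.
have avoid := rewire_cycle_avoids_b up sp cp.
exists (map unrewire p); split.
- by rewrite size_map.
- by rewrite map_inj_in_uniq // => x y /avoid ax /avoid ay; apply: unrewire_inj.
- rewrite cycle_map; apply: (sub_in_cycle (P := avoids_b)) cp; last exact/allP.
  move=> [x|[i O]] [y|[i2 O2]] /= ax ay; rewrite /relpre.
  + by rewrite Sedge_black_black.
  + exact: unrewire_edge.
  + move=> e_Oy; rewrite Sedge_sym; apply: (unrewire_edge ay ax); by rewrite Sedge_sym.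
  + by rewrite Sedge_color_color.
Qed.

Lemma t_b_other i : i \in A -> i != j -> t i b = w.
Proof. by move=> iA ij; apply/eqP; rewrite -(perm_col_fixed t_inv) fix_other. Qed.

Lemma rewire_b_any i : i \in A -> t' i b = w.
Proof.
by move=> iA; have [->|ij] := eqVneq i j; rewrite ?rewire_b // rewire_other // t_b_other.
Qed.

Lemma rewire_w_any i : i \in A -> t' i w = b.
Proof. by move=> iA; rewrite -(rewire_b_any iA) rewire_inv. Qed.

Lemma residue_rewire_w'_avoids z : z \in residue c t' w' -> (z != b) && (z != w).
Proof.
apply: (residue_ind (X := [pred z | (z != b) && (z != w)])).
  by rewrite /= eq_sym neq_bw' neq_w'w.
move=> u i /andP [ub uw] iA /=; apply/andP; split.
  by apply: contraNneq uw => tub; rewrite -(rewire_b_any iA) -tub rewire_inv.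
by apply: contraNneq ub => tuw; rewrite -(rewire_w_any iA) -tuw rewire_inv.
Qed.

Lemma residue_b_sub : {subset residue c t b <= b |: (w |: residue c t' w')}.
Proof.
apply: (residue_ind (X := [pred z | z \in b |: (w |: residue c t' w')])).
  by rewrite /= !in_setU1 eqxx.
have w'R : w' \in residue c t' w' by apply: residue_root.
have b'R : b' \in residue c t' w' by rewrite -rewire_w'; apply: residue_step.
move=> u i hu iA; rewrite /= !in_setU1 in hu *.
have [ij|ij] := eqVneq i j; last first.
  case/or3P: hu => [/eqP ->|/eqP ->|uR]; first by rewrite t_b_other // eqxx orbT.
    by rewrite -(t_b_other iA ij) t_inv eqxx.
  by case/andP: (residue_rewire_w'_avoids uR) => ub uw; rewrite -rewire_other // residue_step ?orbT.
rewrite ij; case/or3P: hu => [/eqP ->|/eqP ->|uR]; first by rewrite w'R !orbT.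
  by rewrite b'R !orbT.
case/andP: (residue_rewire_w'_avoids uR) => ub uw.
have [->|ub'] := eqVneq u b'; first by rewrite t_inv eqxx orbT.
have [->|uw'] := eqVneq u w'; first by rewrite t_inv eqxx.
by rewrite -rewire_rest // residue_step ?orbT.
Qed.

Lemma residue_b_sup : {subset b |: (w |: residue c t' w') <= residue c t b}.
Proof.
move=> z; have [k kA kj] := residue_color_other q3 c0 j.
have wR : w \in residue c t b by rewrite -(t_b_other kA kj) residue_step ?residue_root.
rewrite !in_setU1 => /or3P [/eqP ->|/eqP ->|]; [exact: residue_root | exact: wR|].
apply: (residue_ind (X := [pred z | z \in residue c t b])).
  by rewrite /= -[w']/(t j b) residue_step ?residue_root.
move=> u i /= uR iA.
have [ij|ij] := eqVneq i j; last by rewrite rewire_other // residue_step.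
rewrite ij.
have [->|ub] := eqVneq u b; first by rewrite rewire_b.
have [->|uw] := eqVneq u w; first by rewrite rewire_w residue_root.
have [->|ub'] := eqVneq u b'; first by rewrite rewire_b' residue_step ?residue_root.
have [->|uw'] := eqVneq u w'; first by rewrite rewire_w' residue_step.
by rewrite rewire_rest // residue_step.
Qed.

Lemma residue_b_split : residue c t b = b |: (w |: residue c t' w').
Proof. by apply/setP=> z; apply/idP/idP => [/residue_b_sub|/residue_b_sup]. Qed.

Lemma residue_away_from_b v : ~~ connect (residue_rel t c) v b ->
  residue c t v = residue c t' v /\
  forall z, z \in residue c t v -> [&& z != b, z != w, z != b' & z != w'].
Proof.
move=> vb.
have avoid z : z \in residue c t v -> [&& z != b, z != w, z != b' & z != w'].
  rewrite inE => vz.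
  have far y : y \in b |: (w |: residue c t' w') -> z != y.
    move=> /residue_b_sup yR; apply: contraNneq vb => zy.
    by rewrite zy in vz; apply: connect_trans vz (residue_back t_inv yR).
  have w'R : w' \in residue c t' w' by apply: residue_root.
  have b'R : b' \in residue c t' w' by rewrite -rewire_w'; apply: residue_step.
  by rewrite !far // !in_setU1 ?eqxx ?w'R ?b'R ?orbT.
have sub' : {subset residue c t' v <= residue c t v}.
  apply: (residue_ind (X := [pred z | z \in residue c t v])); first exact: residue_root.
  move=> u i /= uR iA; case/and4P: (avoid _ uR) => ub uw ub' uw'.
  have [->|ij] := eqVneq i j; last by rewrite rewire_other // residue_step.
  by rewrite rewire_rest // residue_step.
split=> //; apply/setP=> z; apply/idP/idP; last exact: sub'.
apply: (residue_ind (X := [pred z | z \in residue c t' v])); first exact: residue_root.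
move=> u i /= uR iA; case/and4P: (avoid _ (sub' _ uR)) => ub uw ub' uw'.
have [->|ij] := eqVneq i j; last by rewrite -rewire_other // residue_step.
by rewrite -rewire_rest // residue_step.
Qed.

(* Main inductive step: if all residues of t' are melonic, so are those of t.
   The residue of b arises from that of w' by inserting {b, w} on the j-edge
   {w', b'}; the other residues are untouched. *)
Lemma melonic_rewire : (forall v, melonic A (residue c t' v) t') ->
  forall v, melonic A (residue c t v) t.
Proof.
move=> melo_t' v.
have [vb|vb] := boolP (connect (residue_rel t c) v b); last first.
  have [same_R avoid] := residue_away_from_b vb; rewrite same_R.
  apply: (melonic_transfer (melo_t' v)) => a z aA zR.
  have /and4P [zb zw zb' zw'] : [&& z != b, z != w, z != b' & z != w'].
    by apply: avoid; rewrite same_R.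
  by have [->|aj] := eqVneq a j; rewrite ?rewire_rest ?rewire_other.
rewrite (residue_eq t_inv vb) residue_b_split.
have [b_out w_out] : b \notin residue c t' w' /\ w \notin residue c t' w'.
  by split; apply/negP=> /residue_rewire_w'_avoids; rewrite eqxx ?andbF.
apply: (melonic_insert (melo_t' w') jA (residue_root _ _ _) b_out w_out neq_bw).
- by move=> k kA kj; rewrite t_b_other // -(t_b_other kA kj) t_inv.
- by rewrite t_inv.
- by [].
- by rewrite rewire_w'.
- by rewrite rewire_w' t_inv.
- by move=> k z kA kj _; rewrite rewire_other.
- move=> z /residue_rewire_w'_avoids /andP [zb zw] zw'; rewrite rewire_w' => zb'.
  by rewrite rewire_rest.
Qed.

(* Rewiring makes b a full dipole without changing perm_col at the other
   black vertices, except that b' now moves where b used to go. *)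
Lemma defect_rewire : defect black c t' < defect black c t.
Proof.
rewrite /defect; set X := [set z | _ && _]; set Y := [set z | _ && _].
have bY : b \in Y by rewrite inE bb /=; apply/existsP; exists j; rewrite jA nfj.
suff /subset_leq_card : X \subset Y :\ b by rewrite (cardsD1 b Y) bY add1n.
apply/subsetP=> z; rewrite !inE => /andP [bz /existsP [i /andP [iA nf]]].
have zb : z != b by apply: contraNneq nf => ->; rewrite rewire_fixes_b.
rewrite zb bz /=; apply/existsP.
have [ij|ij] := eqVneq i j; last by exists i; rewrite iA -(perm_col_rewire_other ij).
exists j; rewrite jA /=.
have [->|zb'] := eqVneq z b'; first by rewrite perm_col_b' eq_sym neq_b'b.
by rewrite -perm_col_rewire_rest // -ij.
Qed.

End Rewire.

Section Induction.
Variables (q : nat) (V : finType) (black : pred V) (c : 'I_q.+1).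
Hypotheses (q3 : 3 <= q) (c0 : c != ord0).
Local Notation A := (residue_colors c).

(* Without defect every residue edge is parallel to a 0-edge, so each residue
   is the two-vertex melon {v, t 0 v}. *)
Lemma melonic_no_defect (t : 'I_q.+1 -> V -> V) :
  (forall i v, t i (t i v) = v) -> (forall i v, black (t i v) = ~~ black v) ->
  defect black c t = 0 -> forall v, melonic A (residue c t v) t.
Proof.
move=> t_inv t_bip /cards0_eq no_defect v.
have parallel z a : a \in A -> t a z = t ord0 z.
  move=> aA; wlog bz : z / black z => [wlog_black|].
    have [/wlog_black //|wz] := boolP (black z).
    have := wlog_black (t ord0 z); rewrite t_bip wz t_inv => /(_ isT) tz.
    by rewrite -{1}tz t_inv.
  apply/eqP; rewrite -(perm_col_fixed t_inv); apply/negPn/negP => nf.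
  have : z \in [set z | black z && [exists i in A, perm_col t i z != z]].
    by rewrite inE bz; apply/existsP; exists a; rewrite aA.
  by rewrite no_defect inE.
have [i1 [i2 [i1A i2A i12]]] := residue_colors_two q3 c0.
have -> : residue c t v = [set v; t ord0 v].
  apply/setP=> z; apply/idP/idP.
    apply: (residue_ind (X := [pred z | z \in [set v; t ord0 v]])); first by rewrite /= !inE eqxx.
    move=> u i /= + iA; rewrite !in_set2 => /orP [] /eqP ->; rewrite parallel ?t_inv ?eqxx ?orbT //.
  rewrite in_set2 => /orP [] /eqP ->; first exact: residue_root.
  by rewrite -(parallel v _ i1A) residue_step ?residue_root.
apply: melonic_base; first by apply/card_gt1P; exists i1, i2.
  by rewrite eq_sym (color_noloop t_bip).
by move=> a aA; rewrite !parallel // t_inv.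
Qed.

Lemma residues_melonic (t : 'I_q.+1 -> V -> V) :
  (forall i v, t i (t i v) = v) -> (forall i v, black (t i v) = ~~ black v) ->
  acyclic_rel (Shat_edge t black c) -> forall v, melonic A (residue c t v) t.
Proof.
move=> t_inv t_bip; have [n] := ubnP (defect black c t).
elim: n t t_inv t_bip => // n IH t t_inv t_bip lt_defect acyc.
have [/(melonic_no_defect t_inv t_bip) //|defect_pos] := eqVneq (defect black c t) 0.
have [|b [j [bb jA nfj fix_other]]] := dipole_exists t_inv t_bip q3 c0 acyc.
  move: defect_pos; rewrite -lt0n => /card_gt0P [z].
  by rewrite inE => /andP [bz /existsP [i /andP [iA nf]]]; exists z, i.
apply: (melonic_rewire q3 c0 t_inv t_bip bb jA nfj fix_other).
apply: IH; [exact: rewire_inv | exact: rewire_bip | | exact: rewire_acyclic].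
exact: leq_trans (defect_rewire t_inv t_bip bb jA nfj fix_other) lt_defect.
Qed.

End Induction.

Theorem mainTheorem14 (q : nat) (V : finType) (s : 'I_q.+1 -> V -> V)
  (r : V) (black : pred V) (c : 'I_q.+1) :
  3 <= q ->
  colored_graph s ->
  rooted_bipartite s r black ->
  c != ord0 ->
  (forall x : Svert q V, Shat_vertex s black c x ->
     is_tree (Shat_edge s black c) [set y | connect (Shat_edge s black c) x y]) ->
  forall v : V,
    melonic (residue_colors c) [set w | connect (residue_rel s c) v w] s.
Proof.
move=> q3 [s_inv _ _] [_ s_bip] c0 components_trees.
apply: residues_melonic => //.
by apply: trees_acyclic components_trees => x y /andP [].
Qed.
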